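(* Let $A$ be a complex semisimple Banach algebra with a unit. Then $\mathrm{Soc}(A)$ is finite-dimensional if and only if the norm closure of $\mathrm{Soc}(A)$ in $A$ has an identity element. *)

From Stdlib Require Import Reals List.
Open Scope R_scope.

Definition C : Type := (R * R)%type.
Definition C0 : C := (0, 0).
Definition C1 : C := (1, 0).
Definition Cadd (a b : C) : C := (fst a + fst b, snd a + snd b).
Definition Cmul (a b : C) : C :=
  (fst a * fst b - snd a * snd b, fst a * snd b + snd a * fst b).
Definition Cmod (a : C) : R := sqrt (fst a * fst a + snd a * snd a).

Record CBanachAlgebra := {
  car :> Type;
  zero : car;
  add : car -> car -> car;
  opp : car -> car;
  smul : C -> car -> car;
  mul : car -> car -> car;
  one : car;
  norm : car -> R;
  add_assoc : forall x y z, add x (add y z) = add (add x y) z;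
  add_comm : forall x y, add x y = add y x;
  add_zero : forall x, add x zero = x;
  add_opp : forall x, add x (opp x) = zero;
  smul_one : forall x, smul C1 x = x;
  smul_assoc : forall a b x, smul a (smul b x) = smul (Cmul a b) x;
  smul_addC : forall a b x, smul (Cadd a b) x = add (smul a x) (smul b x);
  smul_addV : forall a x y, smul a (add x y) = add (smul a x) (smul a y);
  mul_assoc : forall x y z, mul x (mul y z) = mul (mul x y) z;
  mul_one_l : forall x, mul one x = x;
  mul_one_r : forall x, mul x one = x;
  mul_add_l : forall x y z, mul (add x y) z = add (mul x z) (mul y z);
  mul_add_r : forall x y z, mul x (add y z) = add (mul x y) (mul x z);
  mul_smul_l : forall a x y, mul (smul a x) y = smul a (mul x y);
  mul_smul_r : forall a x y, mul x (smul a y) = smul a (mul x y);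
  norm_nonneg : forall x, 0 <= norm x;
  norm_eq0 : forall x, norm x = 0 -> x = zero;
  norm_triangle : forall x y, norm (add x y) <= norm x + norm y;
  norm_smul : forall a x, norm (smul a x) = Cmod a * norm x;
  norm_mul : forall x y, norm (mul x y) <= norm x * norm y;
  complete : forall u : nat -> car,
    (forall eps, 0 < eps -> exists N, forall m n, (N <= m)%nat -> (N <= n)%nat ->
        norm (add (u m) (opp (u n))) < eps) ->
    exists l, forall eps, 0 < eps -> exists N, forall n, (N <= n)%nat ->
        norm (add (u n) (opp l)) < eps
}.

Section Defs.
Variable A : CBanachAlgebra.

Definition subset_eq (S T : A -> Prop) : Prop := forall x, S x <-> T x.

Definition left_ideal (L : A -> Prop) : Prop :=
  L (zero A) /\
  (forall x y, L x -> L y -> L (add A x y)) /\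
  (forall c x, L x -> L (smul A c x)) /\
  (forall a x, L x -> L (mul A a x)).

Definition minimal_left_ideal (L : A -> Prop) : Prop :=
  left_ideal L /\ (exists x, L x /\ x <> zero A) /\
  forall J, left_ideal J -> (forall x, J x -> L x) ->
    subset_eq J (fun x => x = zero A) \/ subset_eq J L.

Definition maximal_left_ideal (M : A -> Prop) : Prop :=
  left_ideal M /\ ~ M (one A) /\
  forall J, left_ideal J -> ~ J (one A) -> (forall x, M x -> J x) -> subset_eq J M.

Definition jacobson_radical (x : A) : Prop :=
  forall M, maximal_left_ideal M -> M x.

Definition semisimple : Prop :=
  forall x, jacobson_radical x -> x = zero A.

(** Socle: the sum (linear span) of all minimal left ideals ({0} if none). *)
Inductive socle : A -> Prop :=
| socle_zero : socle (zero A)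
| socle_add : forall L x y, minimal_left_ideal L -> L x -> socle y ->
    socle (add A x y).

Inductive in_span (l : list A) : A -> Prop :=
| span_zero : in_span l (zero A)
| span_step : forall c v y, In v l -> in_span l y ->
    in_span l (add A (smul A c v) y).

Definition finite_dimensional (S : A -> Prop) : Prop :=
  exists l : list A, forall x, S x -> in_span l x.

Definition closure (S : A -> Prop) (x : A) : Prop :=
  forall eps, 0 < eps -> exists y, S y /\ norm A (add A x (opp A y)) < eps.

Definition has_identity (S : A -> Prop) : Prop :=
  exists e, S e /\ forall x, S x -> mul A e x = x /\ mul A x e = x.

End Defs.

(* The direction "finite-dimensional => unital closure" builds, inside the
   socle, a maximal family of pairwise orthogonal nonzero idempotents; its
   length is bounded by the dimension, and its sum [e] is a right identity of
   the socle.  Semiprimeness turns [e] into a two-sided identity, which then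
   passes to the closure by continuity of multiplication.

   Conversely, an identity [e] of the closure is an idempotent within distance
   1 of the socle, so a Neumann series shows that [e] belongs to the socle.
   By Brauer's lemma every minimal left ideal is [A f] for an idempotent [f],
   and by Gelfand-Mazur [f A f = C f]; hence each [f A f'] is at most
   one-dimensional and the socle [= e Soc(A) e] is finite-dimensional.
   Gelfand-Mazur is proved without integration: averaging the resolvent of
   [b] over the [2^m]-th roots of a circle gives an exact formula in terms of
   [b^(2^m)], while the average is Lipschitz in the angle with a constant that
   does not grow with [m]. *)

From Stdlib Require Import Reals List Lra Lia Psatz Classical ClassicalEpsilon Permutation.
Open Scope R_scope.

Infix "+'" := (add _) (at level 50, left associativity).
Infix "*'" := (mul _) (at level 40, left associativity).
Notation "-' x" := (opp _ x) (at level 35, right associativity).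
Notation "c %* x" := (smul _ c x) (at level 40, left associativity).
Notation "x -' y" := (add _ x (opp _ y)) (at level 50, left associativity).

Definition Copp (a : C) : C := (- fst a, - snd a).
Definition Cinv (a : C) : C :=
  (fst a / (fst a * fst a + snd a * snd a), - snd a / (fst a * fst a + snd a * snd a)).
Definition CR (r : R) : C := (r, 0).
Definition cis (t : R) : C := (cos t, sin t).

Lemma C_ext (a b : C) : fst a = fst b -> snd a = snd b -> a = b.
Proof. destruct a, b; simpl; intros; subst; auto. Qed.

Ltac Csolve := repeat match goal with a : C |- _ => destruct a end;
  apply C_ext; unfold Cadd, Cmul, Copp, CR, C0, C1; simpl; ring.

Lemma Cmul_comm a b : Cmul a b = Cmul b a. Proof. Csolve. Qed.
Lemma Cmul_assoc a b c : Cmul a (Cmul b c) = Cmul (Cmul a b) c. Proof. Csolve. Qed.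
Lemma Cmul_1_l a : Cmul C1 a = a. Proof. Csolve. Qed.

Lemma Cinv_l a : a <> C0 -> Cmul (Cinv a) a = C1.
Proof.
  destruct a as [x y]; intros Ha.
  assert (Hn : x * x + y * y <> 0).
  { intros E. apply Ha. unfold C0. f_equal; nra. }
  apply C_ext; unfold Cmul, Cinv, C1; simpl; field; auto.
Qed.

Lemma Cmod_ge0 a : 0 <= Cmod a. Proof. apply sqrt_pos. Qed.

Lemma Cmod_CR r : Cmod (CR r) = Rabs r.
Proof. unfold Cmod, CR; simpl. replace (r * r + 0 * 0) with (r * r) by ring. apply sqrt_Rsqr_abs. Qed.

Lemma Cmod_C0 : Cmod C0 = 0.
Proof. rewrite <- Rabs_R0, <- Cmod_CR. reflexivity. Qed.

Lemma Cmod_opp1 : Cmod (Copp C1) = 1.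
Proof. unfold Cmod, Copp, C1; simpl. transitivity (sqrt 1); [f_equal; ring | apply sqrt_1]. Qed.

Lemma Cmod_mul a b : Cmod (Cmul a b) = Cmod a * Cmod b.
Proof.
  unfold Cmod, Cmul; destruct a as [x y], b as [u v]; simpl.
  rewrite <- sqrt_mult; try nra. f_equal. ring.
Qed.

Lemma Cmod_cis t : Cmod (cis t) = 1.
Proof.
  unfold Cmod, cis; simpl. pose proof (sin2_cos2 t) as H. unfold Rsqr in H.
  rewrite <- sqrt_1. f_equal. lra.
Qed.

Lemma Cmod_le_abs_sum (x y : R) : Cmod (x, y) <= Rabs x + Rabs y.
Proof.
  unfold Cmod; simpl. pose proof (Rabs_pos x); pose proof (Rabs_pos y).
  apply Rsqr_incr_0_var; [|lra].
  rewrite Rsqr_sqrt by nra. pose proof (Rsqr_abs x). pose proof (Rsqr_abs y).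
  unfold Rsqr in *. nra.
Qed.

Lemma Rabs_le_Cmod (x y : R) : Rabs x <= Cmod (x, y) /\ Rabs y <= Cmod (x, y).
Proof. unfold Cmod; simpl. rewrite <- !sqrt_Rsqr_abs. split; apply sqrt_le_1_alt; unfold Rsqr; nra. Qed.

Lemma Rabs_sin_le x : Rabs (sin x) <= Rabs x.
Proof.
  pose proof (SIN_bound x). pose proof PI2_1.
  destruct (Rtotal_order x 0) as [Hx|[->|Hx]].
  - pose proof (sin_lt_x (- x) ltac:(lra)) as Hs. rewrite sin_neg in Hs.
    destruct (Rle_or_lt x (-1)); [rewrite (Rabs_left x) by lra; unfold Rabs; destruct Rcase_abs; lra|].
    pose proof (sin_lt_0_var x ltac:(lra) Hx). rewrite !Rabs_left; lra.
  - rewrite sin_0, Rabs_R0. lra.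
  - pose proof (sin_lt_x x Hx).
    destruct (Rle_or_lt 1 x); [rewrite (Rabs_right x) by lra; unfold Rabs; destruct Rcase_abs; lra|].
    pose proof (sin_gt_0 x Hx ltac:(lra)). rewrite !Rabs_right; lra.
Qed.

Lemma Cmod_cis_sub_le a b : Cmod (Cadd (cis a) (Copp (cis b))) <= Rabs (a - b).
Proof.
  unfold Cmod, cis, Cadd, Copp; simpl.
  rewrite <- sqrt_Rsqr_abs. apply sqrt_le_1_alt.
  pose proof (cos_2a_sin ((a - b) / 2)) as Hc.
  replace (2 * ((a - b) / 2)) with (a - b) in Hc by field.
  rewrite cos_minus in Hc.
  pose proof (Rsqr_le_abs_1 _ _ (Rabs_sin_le ((a - b) / 2))) as Hs.
  pose proof (sin2_cos2 a). pose proof (sin2_cos2 b). unfold Rsqr in *. nra.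
Qed.

(** * Local boundedness on compact rectangles *)

Lemma interval_local_to_global (P : R -> R -> Prop) a b : a <= b ->
  (forall u v w, u <= v -> v <= w -> P u v -> P v w -> P u w) ->
  (forall x, a <= x <= b -> exists d, 0 < d /\
     forall u v, x - d < u -> u <= v -> v < x + d -> P u v) ->
  P a b.
Proof.
  intros Hab Hglue Hloc.
  set (S := fun t => a <= t <= b /\ P a t).
  assert (Sa : S a).
  { split. lra. destruct (Hloc a) as [d [Hd H]]. lra. apply H; lra. }
  assert (Sb : bound S) by (exists b; intros t [[? ?] _]; auto).
  destruct (completeness S Sb (ex_intro _ a Sa)) as [s [Hub Hlub]].
  assert (Has : a <= s) by (apply Hub; auto).
  assert (Hsb : s <= b) by (apply Hlub; intros t [[? ?] _]; auto).
  destruct (Hloc s) as [d [Hd H]]. lra.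
  assert (exists t, S t /\ s - d < t) as [t [[[Hat Htb] Pt] Ht]].
  { apply NNPP; intros N. assert (s <= s - d); [|lra].
    apply Hlub. intros t St. destruct (Rle_or_lt t (s - d)); auto.
    exfalso; apply N; exists t; auto. }
  assert (Hts : t <= s) by (apply Hub; split; auto).
  set (v := Rmin b (s + d / 2)).
  assert (Hv1 : v <= b) by apply Rmin_l.
  assert (Hv2 : v <= s + d / 2) by apply Rmin_r.
  assert (Htv : t <= v) by (unfold v, Rmin; destruct Rle_dec; lra).
  assert (Pv : P a v) by (apply (Hglue a t v); auto; apply H; lra).
  assert (v <= s) by (apply Hub; split; auto; lra).
  unfold v, Rmin in *. destruct Rle_dec; auto. lra.
Qed.

Lemma rectangle_local_bound (g : R -> R -> R) a b c d : a <= b -> c <= d ->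
  (forall x y, a <= x <= b -> c <= y <= d -> exists e K, 0 < e /\
     forall x' y', Rabs (x' - x) < e -> Rabs (y' - y) < e -> g x' y' <= K) ->
  exists K, forall x y, a <= x <= b -> c <= y <= d -> g x y <= K.
Proof.
  intros Hab Hcd Hloc.
  set (P2 := fun u v => exists K, forall x y, u <= x <= v -> c <= y <= d -> g x y <= K).
  change (P2 a b). apply interval_local_to_global; auto.
  - intros u v w Huv Hvw [K1 H1] [K2 H2]. exists (Rmax K1 K2). intros x y Hx Hy.
    destruct (Rle_or_lt x v).
    + eapply Rle_trans. apply H1; auto. lra. apply Rmax_l.
    + eapply Rle_trans. apply H2; auto. lra. apply Rmax_r.
  - intros x0 Hx0.
    set (P1 := fun u v => exists r K, 0 < r /\
      forall x' y', Rabs (x' - x0) < r -> u <= y' <= v -> g x' y' <= K).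
    assert (P1 c d) as [r [K [Hr H]]].
    { apply interval_local_to_global; auto.
      - intros u v w Huv Hvw [r1 [K1 [Hr1 H1]]] [r2 [K2 [Hr2 H2]]].
        exists (Rmin r1 r2), (Rmax K1 K2). split. apply Rmin_glb_lt; auto.
        intros x' y' Hx' Hy'.
        assert (Rabs (x' - x0) < r1) by (eapply Rlt_le_trans; [exact Hx'|apply Rmin_l]).
        assert (Rabs (x' - x0) < r2) by (eapply Rlt_le_trans; [exact Hx'|apply Rmin_r]).
        destruct (Rle_or_lt y' v).
        + eapply Rle_trans. apply H1; auto. lra. apply Rmax_l.
        + eapply Rle_trans. apply H2; auto. lra. apply Rmax_r.
      - intros y0 Hy0. destruct (Hloc x0 y0 Hx0 Hy0) as [e [K [He H]]].
        exists e. split; auto. intros u v Hu Huv Hv. exists e, K. split; auto.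
        intros x' y' Hx' Hy'. apply H; auto. apply Rabs_def1; lra. }
    exists r. split; auto.
    intros u v Hu Huv Hv. exists K. intros x y Hx Hy. apply H; auto. apply Rabs_def1; lra.
Qed.

Section BanachAlgebra.
Variable A : CBanachAlgebra.

Lemma add_0_l (x : A) : zero A +' x = x.
Proof. rewrite add_comm; apply add_zero. Qed.

Lemma add_opp_l (x : A) : -' x +' x = zero A.
Proof. rewrite add_comm; apply add_opp. Qed.

Lemma sub_diag (x : A) : x -' x = zero A.
Proof. apply add_opp. Qed.

Lemma add_cancel_l (x y z : A) : x +' y = x +' z -> y = z.
Proof.
  intros H. rewrite <- (add_0_l y), <- (add_0_l z), <- (add_opp_l x).
  rewrite <- !add_assoc, H; auto.
Qed.

Lemma add_move_r (x y z : A) : x +' y = z -> x = z -' y.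
Proof. intros <-. rewrite <- add_assoc, add_opp, add_zero; auto. Qed.

Lemma opp_opp (x : A) : -' -' x = x.
Proof. apply (add_cancel_l (-' x)). rewrite add_opp, add_opp_l; auto. Qed.

Lemma sub_eq0 (x y : A) : x -' y = zero A -> x = y.
Proof. intros H. apply add_move_r in H. rewrite H, add_0_l, opp_opp. auto. Qed.

Lemma smul_C0 (x : A) : C0 %* x = zero A.
Proof.
  apply (add_cancel_l (C0 %* x)). rewrite <- smul_addC, add_zero.
  f_equal. Csolve.
Qed.

Lemma smul_zero (c : C) : c %* zero A = zero A.
Proof. apply (add_cancel_l (c %* zero A)). rewrite <- smul_addV, !add_zero. auto. Qed.

Lemma smul_opp1 (x : A) : Copp C1 %* x = -' x.
Proof.
  apply (add_cancel_l x). rewrite add_opp.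
  rewrite <- (smul_one _ x) at 1. rewrite <- smul_addC, <- (smul_C0 x). f_equal. Csolve.
Qed.

Lemma opp_add (x y : A) : -' (x +' y) = -' x +' -' y.
Proof. rewrite <- !smul_opp1, smul_addV. auto. Qed.

Lemma opp_zero : -' zero A = zero A.
Proof. rewrite <- smul_opp1, smul_zero; auto. Qed.

Lemma sub_0_r (x : A) : x -' zero A = x.
Proof. rewrite opp_zero, add_zero; auto. Qed.

Lemma smul_opp c (x : A) : c %* (-' x) = -' (c %* x).
Proof. rewrite <- !smul_opp1, !smul_assoc. f_equal. Csolve. Qed.

Lemma smul_Copp c (x : A) : Copp c %* x = -' (c %* x).
Proof. rewrite <- !smul_opp1, !smul_assoc. f_equal. Csolve. Qed.

Lemma smul_sub_C (z w : C) (x : A) : z %* x -' w %* x = Cadd z (Copp w) %* x.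
Proof. rewrite smul_addC, smul_Copp; auto. Qed.

Lemma mul_0_l (x : A) : zero A *' x = zero A.
Proof. rewrite <- (smul_C0 (zero A)) at 1. rewrite mul_smul_l, smul_C0; auto. Qed.

Lemma mul_0_r (x : A) : x *' zero A = zero A.
Proof. rewrite <- (smul_C0 (zero A)) at 1. rewrite mul_smul_r, smul_C0; auto. Qed.

Lemma mul_sub_l (x y z : A) : (x -' y) *' z = x *' z -' y *' z.
Proof. rewrite mul_add_l, <- !smul_opp1, mul_smul_l; auto. Qed.

Lemma mul_sub_r (x y z : A) : x *' (y -' z) = x *' y -' x *' z.
Proof. rewrite mul_add_r, <- !smul_opp1, mul_smul_r; auto. Qed.

Lemma sub_sub_self (x y : A) : x -' (x -' y) = y.
Proof. rewrite opp_add, opp_opp, add_assoc, add_opp, add_0_l. auto. Qed.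

Lemma sub_swap_self (a b : A) : (a -' b) -' a = -' b.
Proof. rewrite add_comm, add_assoc, add_opp_l, add_0_l. auto. Qed.

Lemma sub_add_sub (x y z : A) : (x -' y) +' (y -' z) = x -' z.
Proof. rewrite <- !add_assoc. f_equal. rewrite add_assoc, add_opp_l, add_0_l. auto. Qed.

Lemma sub_sub_cancel_l (a c d : A) : (a -' c) -' (a -' d) = d -' c.
Proof.
  rewrite opp_add, opp_opp, <- !add_assoc, (add_comm _ (-' a) d), (add_comm _ (-' c) (d +' -' a)),
    add_assoc, (add_comm _ d (-' a)), add_assoc, add_opp, add_0_l. auto.
Qed.

Lemma sub_sub_cancel_r (a b c : A) : (a -' b) -' (c -' b) = a -' c.
Proof.
  rewrite opp_add, opp_opp, <- add_assoc, (add_assoc _ (-' b)), (add_comm _ (-' b) (-' c)),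
    <- add_assoc, add_opp_l, add_zero. auto.
Qed.

Lemma sub_sub_sub (p q r s : A) : (p -' q) -' (r -' s) = p -' (q +' r) +' s.
Proof. rewrite !opp_add, opp_opp, <- !add_assoc. auto. Qed.

Lemma add_add_sub (x y : A) : (x +' y) +' (x -' y) = x +' x.
Proof.
  rewrite <- !add_assoc. f_equal.
  rewrite add_assoc, (add_comm _ y x), <- add_assoc, add_opp, add_zero. auto.
Qed.

Lemma add_sub_add (a b c d : A) : (a +' b) -' (c +' d) = (a -' c) +' (b -' d).
Proof.
  rewrite opp_add, <- !add_assoc. f_equal. rewrite !add_assoc. f_equal. apply add_comm.
Qed.

Lemma norm_zero : norm A (zero A) = 0.
Proof. rewrite <- (smul_C0 (zero A)), norm_smul, Cmod_C0; ring. Qed.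

Lemma norm_opp (x : A) : norm A (-' x) = norm A x.
Proof. rewrite <- smul_opp1, norm_smul, Cmod_opp1; ring. Qed.

Lemma norm_sub_sym (x y : A) : norm A (x -' y) = norm A (y -' x).
Proof. rewrite <- norm_opp, opp_add, opp_opp, add_comm; auto. Qed.

Lemma norm_sub_le (x y : A) : norm A (x -' y) <= norm A x + norm A y.
Proof. rewrite <- (norm_opp y). apply norm_triangle. Qed.

Lemma norm_le_add_sub (x y : A) : norm A x <= norm A y + norm A (x -' y).
Proof.
  replace x with (y +' (x -' y)) at 1. apply norm_triangle.
  rewrite add_comm, <- add_assoc, add_opp_l, add_zero; auto.
Qed.

Lemma norm_pos (x : A) : x <> zero A -> 0 < norm A x.
Proof.
  intros Hx. destruct (Rle_lt_or_eq_dec _ _ (norm_nonneg A x)) as [|E]; auto.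
  exfalso. apply Hx, norm_eq0. auto.
Qed.

Lemma eq_of_norm_sub_small (x y : A) :
  (forall eps, 0 < eps -> norm A (x -' y) < eps) -> x = y.
Proof.
  intros H. apply sub_eq0. destruct (classic (x -' y = zero A)) as [|Hn]; auto.
  specialize (H _ (norm_pos _ Hn)). lra.
Qed.

Section LeftIdeals.
Variable L : A -> Prop.
Hypothesis HL : left_ideal A L.

Lemma left_ideal0 : L (zero A). Proof. apply HL. Qed.
Lemma left_idealD x y : L x -> L y -> L (x +' y). Proof. apply HL. Qed.
Lemma left_idealZ c x : L x -> L (c %* x). Proof. apply HL. Qed.
Lemma left_idealM a x : L x -> L (a *' x). Proof. apply HL. Qed.
Lemma left_idealB x y : L x -> L y -> L (x -' y).
Proof. intros Hx Hy. apply left_idealD; auto. rewrite <- smul_opp1. apply left_idealZ; auto. Qed.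

End LeftIdeals.

Definition right_translate (L : A -> Prop) (b : A) : A -> Prop :=
  fun y => exists x, L x /\ y = x *' b.

Lemma left_ideal_full : left_ideal A (fun _ => True).
Proof. repeat split. Qed.

Lemma left_ideal_zero_set : left_ideal A (fun x => x = zero A).
Proof.
  repeat split; intros; subst.
  apply add_zero. apply smul_zero. apply mul_0_r.
Qed.

Lemma left_ideal_right_translate L b : left_ideal A L -> left_ideal A (right_translate L b).
Proof.
  intros HL. split; [|split; [|split]].
  - exists (zero A). split. apply left_ideal0; auto. rewrite mul_0_l; auto.
  - intros x y [u [Hu ->]] [v [Hv ->]]. exists (u +' v).
    split. apply left_idealD; auto. rewrite mul_add_l; auto.
  - intros c x [u [Hu ->]]. exists (c %* u). split. apply left_idealZ; auto. rewrite mul_smul_l; auto.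
  - intros a x [u [Hu ->]]. exists (a *' u). split. apply left_idealM; auto. rewrite mul_assoc; auto.
Qed.

Lemma left_ideal_inter_preimage L J b : left_ideal A L -> left_ideal A J ->
  left_ideal A (fun x => L x /\ J (x *' b)).
Proof.
  intros HL HJ. split; [|split; [|split]].
  - split. apply left_ideal0; auto. rewrite mul_0_l. apply left_ideal0; auto.
  - intros x y [? ?] [? ?]. split. apply left_idealD; auto. rewrite mul_add_l. apply left_idealD; auto.
  - intros c x [? ?]. split. apply left_idealZ; auto. rewrite mul_smul_l. apply left_idealZ; auto.
  - intros a x [? ?]. split. apply left_idealM; auto. rewrite <- mul_assoc. apply left_idealM; auto.
Qed.

Lemma minimal_right_translate L b : minimal_left_ideal A L ->
  (forall x, L x -> x *' b = zero A) \/ minimal_left_ideal A (right_translate L b).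
Proof.
  intros [HL [_ Hmin]].
  destruct (classic (forall x, L x -> x *' b = zero A)) as [|Hb]; [left; auto|right].
  apply not_all_ex_not in Hb as [x0 Hx0]. apply imply_to_and in Hx0 as [Lx0 Hx0].
  split; [apply left_ideal_right_translate; auto|split].
  - exists (x0 *' b). split; auto. exists x0; auto.
  - intros J HJ Jsub.
    destruct (Hmin _ (left_ideal_inter_preimage L J b HL HJ) (fun x H => proj1 H)) as [E|E].
    + left. intros y; split.
      * intros Jy. destruct (Jsub y Jy) as [x [Lx ->]].
        rewrite (proj1 (E x) (conj Lx Jy)), mul_0_l; auto.
      * intros ->. apply left_ideal0; auto.
    + right. intros y; split; auto. intros [x [Lx ->]]. apply (proj2 (E x) Lx).
Qed.

Lemma minimal_left_ideal_generated L y : minimal_left_ideal A L -> L y -> y <> zero A ->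
  forall z, L z -> exists a, z = a *' y.
Proof.
  intros [HL [_ Hmin]] Ly Hy z Lz.
  destruct (Hmin _ (left_ideal_right_translate _ y left_ideal_full)) as [E|E].
  - intros w [a [_ ->]]. apply left_idealM; auto.
  - exfalso. apply Hy, E. exists (one A). rewrite mul_one_l; auto.
  - destruct (proj2 (E z) Lz) as [a [_ ->]]. eauto.
Qed.

Lemma socle_of_minimal L x : minimal_left_ideal A L -> L x -> socle A x.
Proof. intros HL Lx. rewrite <- (add_zero _ x). econstructor; eauto. constructor. Qed.

Lemma socleD x y : socle A x -> socle A y -> socle A (x +' y).
Proof.
  induction 1; intros Hy. rewrite add_0_l; auto.
  rewrite <- add_assoc. econstructor; eauto.
Qed.

Lemma socleZ c x : socle A x -> socle A (c %* x).
Proof.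
  induction 1. rewrite smul_zero; constructor.
  rewrite smul_addV. econstructor; eauto. apply left_idealZ; auto. apply H.
Qed.

Lemma socleB x y : socle A x -> socle A y -> socle A (x -' y).
Proof. intros; apply socleD; auto. rewrite <- smul_opp1; apply socleZ; auto. Qed.

Lemma socleMl a x : socle A x -> socle A (a *' x).
Proof.
  induction 1. rewrite mul_0_r; constructor.
  rewrite mul_add_r. econstructor; eauto. apply left_idealM; auto. apply H.
Qed.

Lemma socleMr b x : socle A x -> socle A (x *' b).
Proof.
  induction 1. rewrite mul_0_l; constructor.
  rewrite mul_add_l. destruct (minimal_right_translate L b H) as [Z|M].
  - rewrite (Z x H0), add_0_l; auto.
  - econstructor; eauto. exists x; auto.
Qed.

Lemma closure_incl (S : A -> Prop) x : S x -> closure A S x.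
Proof. intros Sx eps He. exists x. split; auto. rewrite sub_diag, norm_zero. auto. Qed.

(** * Semiprimeness and Brauer's lemma *)

Inductive generated_ideal (x : A) : A -> Prop :=
| generated_ideal0 : generated_ideal x (zero A)
| generated_idealS a y t : generated_ideal x t -> generated_ideal x (a *' x *' y +' t).

Lemma generated_idealD x s t : generated_ideal x s -> generated_ideal x t -> generated_ideal x (s +' t).
Proof. induction 1; intros. rewrite add_0_l; auto. rewrite <- add_assoc. constructor; auto. Qed.

Lemma generated_idealZ x c t : generated_ideal x t -> generated_ideal x (c %* t).
Proof.
  induction 1. rewrite smul_zero; constructor.
  rewrite smul_addV, <- !mul_smul_l. constructor; auto.
Qed.

Lemma generated_idealM x b t : generated_ideal x t -> generated_ideal x (b *' t).
Proof. induction 1. rewrite mul_0_r; constructor. rewrite mul_add_r, !mul_assoc. constructor; auto. Qed.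

(* If [x] were outside [M], maximality would put [1] into [M + AxA], and then
   [x = x 1] would lie in [x M], a subset of [M]. *)
Lemma maximal_left_ideal_mem M x : maximal_left_ideal A M ->
  (forall t, generated_ideal x t -> x *' t = zero A) -> M x.
Proof.
  intros [HM [_ Hmax]] Hx.
  set (Q := fun z => exists m t, M m /\ generated_ideal x t /\ z = m +' t).
  assert (HQ : left_ideal A Q).
  { split; [|split; [|split]].
    - exists (zero A), (zero A). split. apply left_ideal0; auto.
      split. constructor. rewrite add_zero; auto.
    - intros u v [m1 [t1 [? [? ->]]]] [m2 [t2 [? [? ->]]]]. exists (m1 +' m2), (t1 +' t2).
      split. apply left_idealD; auto. split. apply generated_idealD; auto.
      rewrite !add_assoc. f_equal. rewrite <- !add_assoc. f_equal. apply add_comm.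
    - intros c u [m1 [t1 [? [? ->]]]]. exists (c %* m1), (c %* t1). split. apply left_idealZ; auto.
      split. apply generated_idealZ; auto. apply smul_addV.
    - intros a u [m1 [t1 [? [? ->]]]]. exists (a *' m1), (a *' t1). split. apply left_idealM; auto.
      split. apply generated_idealM; auto. apply mul_add_r. }
  destruct (classic (Q (one A))) as [[m [t [Hm [Ht E]]]]|Q1].
  - replace x with (x *' m). apply left_idealM; auto.
    rewrite <- (mul_one_r _ x) at 2. rewrite E, mul_add_r, (Hx t Ht), add_zero; auto.
  - apply (Hmax Q HQ Q1).
    { intros z Hz. exists z, (zero A). split; auto. split. constructor. rewrite add_zero; auto. }
    exists (zero A), x. split. apply left_ideal0; auto. split; [|rewrite add_0_l; auto].
    replace x with (one A *' x *' one A +' zero A) at 2 by (rewrite add_zero, mul_one_l, mul_one_r; auto).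
    repeat constructor.
Qed.

Record minimal_idempotent (L : A -> Prop) (f : A) : Prop := {
  mi_min : minimal_left_ideal A L;
  mi_in : L f;
  mi_idem : f *' f = f;
  mi_nz : f <> zero A;
  mi_gen : forall y, L y <-> exists a, y = a *' f }.

Lemma minimal_idempotent_mulr L f y : minimal_idempotent L f -> L y -> y *' f = y.
Proof.
  intros M Ly. apply (mi_gen _ _ M) in Ly as [a ->].
  rewrite <- mul_assoc, (mi_idem _ _ M); auto.
Qed.

Section Semisimple.
Hypothesis hA : semisimple A.

Lemma semisimple_semiprime x : (forall a c, (a *' x) *' (c *' x) = zero A) -> x = zero A.
Proof.
  intros Hx. apply hA. intros M HM. apply maximal_left_ideal_mem; auto.
  induction 1. apply mul_0_r.
  rewrite mul_add_r, IHgenerated_ideal, add_zero, !mul_assoc.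
  specialize (Hx (one A) a). rewrite mul_one_l, mul_assoc in Hx. rewrite Hx. apply mul_0_l.
Qed.

Lemma brauer_lemma L : minimal_left_ideal A L -> exists f, minimal_idempotent L f.
Proof.
  intros HM. pose proof HM as [HL [[x0 [Lx0 Hx0]] Hmin]].
  assert (exists y z, L y /\ L z /\ z *' y <> zero A) as [y [z [Ly [Lz Hzy]]]].
  { apply NNPP; intros N. apply Hx0, semisimple_semiprime. intros a c.
    apply NNPP; intros N2. apply N. exists (c *' x0), (a *' x0).
    split; [|split]; [apply left_idealM; auto|apply left_idealM; auto|exact N2]. }
  assert (Hy : y <> zero A) by (intros ->; apply Hzy, mul_0_r).
  destruct (Hmin _ (left_ideal_right_translate L y HL)) as [E|E].
  { intros w [u [Lu ->]]. apply left_idealM; auto. }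
  { exfalso. apply Hzy, E. exists z; auto. }
  destruct (proj2 (E y) Ly) as [f [Lf Ef]].
  set (K := fun u => L u /\ u *' y = zero A).
  destruct (Hmin K (left_ideal_inter_preimage _ _ y HL left_ideal_zero_set) (fun u H => proj1 H))
    as [EK|EK].
  2: { exfalso. apply Hzy, EK; auto. }
  assert (Hff : f *' f = f).
  { apply sub_eq0, EK. split. apply left_idealB; auto. apply left_idealM; auto.
    rewrite mul_sub_l, <- mul_assoc, <- Ef, <- Ef, sub_diag; auto. }
  assert (Hfnz : f <> zero A) by (intros ->; apply Hy; rewrite Ef, mul_0_l; auto).
  exists f. constructor; auto.
  intros w. split.
  - apply (minimal_left_ideal_generated L f HM Lf Hfnz).
  - intros [a ->]. apply left_idealM; auto.
Qed.

End Semisimple.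

(** * Gelfand-Mazur in a corner [f A f] *)

Fixpoint cpow (f x : A) (k : nat) : A :=
  match k with O => f | S k => x *' cpow f x k end.

Section CornerPowers.
Variables f x : A.
Hypothesis Hff : f *' f = f.

Lemma cpow_f_l : f *' x = x -> forall k, f *' cpow f x k = cpow f x k.
Proof. intros Hfx k. induction k; simpl; auto. rewrite mul_assoc, Hfx; auto. Qed.

Lemma cpow_f_r : x *' f = x -> forall k, cpow f x k *' f = cpow f x k.
Proof. intros Hxf k. induction k; simpl; auto. rewrite <- mul_assoc, IHk; auto. Qed.

Lemma cpow_add : f *' x = x -> forall i j, cpow f x (i + j) = cpow f x i *' cpow f x j.
Proof. intros Hfx i j. induction i; simpl. rewrite cpow_f_l; auto. rewrite IHi, mul_assoc; auto. Qed.

Lemma cpow_comm z : f *' z = z -> z *' f = z -> x *' z = z *' x ->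
  forall k, cpow f x k *' z = z *' cpow f x k.
Proof.
  intros H1 H2 H3 k. induction k; simpl. rewrite H1, H2; auto.
  rewrite <- mul_assoc, IHk, !mul_assoc, H3. auto.
Qed.

Lemma cpow_inv z : f *' z = z -> z *' f = z -> x *' z = z *' x -> x *' z = f ->
  forall k, cpow f x k *' cpow f z k = f.
Proof.
  intros H1 H2 Hc Hxz k. induction k; simpl; auto.
  rewrite mul_assoc, <- (mul_assoc _ x), cpow_comm; auto.
  rewrite mul_assoc, Hxz, <- mul_assoc, IHk. auto.
Qed.

End CornerPowers.

Lemma cpow_norm f x k : norm A (cpow f x k) <= norm A x ^ k * norm A f.
Proof.
  induction k; simpl. lra. eapply Rle_trans. apply norm_mul.
  rewrite Rmult_assoc. apply Rmult_le_compat_l; auto. apply norm_nonneg.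
Qed.

Lemma scaled_inverse_norms (Y : A) r N (rho := CR (r ^ N)) : 0 < norm A Y -> r ^ N = / norm A Y ->
  norm A (Cadd rho rho %* Y) = 2 /\ norm A (Cmul rho rho %* (Y *' Y)) <= 1.
Proof.
  intros HY HrN. pose proof (Rinv_0_lt_compat _ HY).
  assert (Hrho : Cmod rho = / norm A Y) by (unfold rho; rewrite Cmod_CR, HrN; apply Rabs_right; lra).
  split.
  - rewrite norm_smul. replace (Cadd rho rho) with (CR (2 * r ^ N)) by (unfold rho; Csolve).
    rewrite Cmod_CR, HrN, Rabs_right by lra. field. lra.
  - rewrite norm_smul, Cmod_mul, Hrho. pose proof (norm_mul A Y Y).
    replace 1 with (/ norm A Y * / norm A Y * (norm A Y * norm A Y)) by (field; lra).
    apply Rmult_le_compat_l; nra.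
Qed.

Record corner_resolvent (f b : A) (F : C -> A) : Prop := {
  cr_idem : f *' f = f;
  cr_nz : f <> zero A;
  cr_fb : f *' b = b;
  cr_bf : b *' f = b;
  cr_inv_l : forall z, F z *' (b -' z %* f) = f;
  cr_inv_r : forall z, (b -' z %* f) *' F z = f;
  cr_fF : forall z, f *' F z = F z;
  cr_Ff : forall z, F z *' f = F z }.

Definition circle_power (m : nat) (r t : R) : C := Cmul (CR (r ^ (2 ^ m))) (cis (INR (2 ^ m) * t)).

Lemma circle_power_O r t : circle_power 0 r t = Cmul (CR r) (cis t).
Proof. unfold circle_power. simpl. rewrite Rmult_1_r, Rmult_1_l. auto. Qed.

Lemma circle_power_S m r t : circle_power (S m) r t = Cmul (circle_power m r t) (circle_power m r t).
Proof.
  unfold circle_power. replace (2 ^ S m)%nat with (2 ^ m + 2 ^ m)%nat by (simpl; lia).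
  rewrite pow_add, plus_INR. replace ((INR (2 ^ m) + INR (2 ^ m)) * t) with (2 * (INR (2 ^ m) * t)) by ring.
  unfold cis. rewrite cos_2a, sin_2a. apply C_ext; unfold Cmul, CR; simpl; ring.
Qed.

Lemma circle_power_shift m r t : circle_power m r (t + PI / 2 ^ m) = Copp (circle_power m r t).
Proof.
  unfold circle_power. rewrite pow_INR. replace (INR 2) with 2 by (simpl; ring).
  replace (2 ^ m * (t + PI / 2 ^ m)) with (2 ^ m * t + PI) by (field; apply pow_nonzero; lra).
  unfold cis. rewrite neg_cos, neg_sin. apply C_ext; unfold Cmul, CR, Copp; simpl; ring.
Qed.

Lemma circle_power_0 m r : circle_power m r 0 = CR (r ^ (2 ^ m)).
Proof. unfold circle_power, cis. rewrite Rmult_0_r, cos_0, sin_0. apply C_ext; unfold Cmul, CR; simpl; ring. Qed.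

Lemma root_radius (nY nb c : R) (N : nat) : (0 < N)%nat -> 0 < nY -> 0 <= nb <= c ->
  1 <= nY * nb ^ N -> exists r, 0 < r /\ r <= c /\ r ^ N = / nY.
Proof.
  intros HN HY Hb Hbig. assert (HINR : 0 < INR N) by (apply lt_0_INR; lia).
  assert (Hc : 0 < c).
  { destruct (Rle_lt_or_eq_dec _ _ (proj1 Hb)) as [|<-]; [lra|].
    rewrite pow_i in Hbig by lia. lra. }
  exists (Rpower (/ nY) (/ INR N)). split; [|split].
  - unfold Rpower. apply exp_pos.
  - replace c with (Rpower (c ^ N) (/ INR N)).
    2: { rewrite <- Rpower_pow by auto. rewrite Rpower_mult, Rinv_r by lra. apply Rpower_1; auto. }
    apply Rle_Rpower_l. left; apply Rinv_0_lt_compat; auto.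
    split. apply Rinv_0_lt_compat; auto.
    assert (nb ^ N <= c ^ N) by (apply pow_incr; lra).
    apply (Rmult_le_reg_l nY); auto. rewrite Rinv_r by lra. nra.
  - rewrite <- Rpower_pow by (unfold Rpower; apply exp_pos).
    rewrite Rpower_mult, Rinv_l by lra. apply Rpower_1. apply Rinv_0_lt_compat; auto.
Qed.

(* [dyadic_mean F m r t] averages [F] over the [2^m] points
   [r cis (t + k pi / 2^(m-1))]. *)
Fixpoint dyadic_mean (F : C -> A) (m : nat) (r t : R) : A :=
  match m with
  | O => F (Cmul (CR r) (cis t))
  | S k => CR (/ 2) %* (dyadic_mean F k r t +' dyadic_mean F k r (t + PI / 2 ^ k))
  end.

Lemma half_double (Y : A) : CR (/ 2) %* (Y +' Y) = Y.
Proof.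
  rewrite <- (smul_one _ Y) at 1 2. rewrite <- smul_addC, smul_assoc.
  replace (Cmul (CR (/ 2)) (Cadd C1 C1)) with C1 by (apply C_ext; unfold Cmul, CR, Cadd, C1; simpl; field).
  apply smul_one.
Qed.

Section CornerResolvent.
Variables (f b : A) (F : C -> A).
Hypothesis H : corner_resolvent f b F.

Lemma corner_mul_sub (X : A) a c : X *' f = X -> f *' X = X ->
  (X -' a %* f) *' (X -' c %* f) = X *' X -' Cadd a c %* X +' Cmul a c %* f.
Proof.
  intros HXf HfX. pose proof (cr_idem _ _ _ H) as Hff.
  rewrite mul_sub_l, !mul_sub_r, mul_smul_r, HXf, !mul_smul_l, mul_smul_r, HfX, Hff, smul_assoc.
  rewrite sub_sub_sub, smul_addC, (add_comm _ (c %* X)). auto.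
Qed.

Lemma corner_square_sub (X : A) a : X *' f = X -> f *' X = X ->
  (X -' a %* f) *' (X -' Copp a %* f) = X *' X -' Cmul a a %* f /\
  (X -' Copp a %* f) *' (X -' a %* f) = X *' X -' Cmul a a %* f.
Proof.
  intros HXf HfX. rewrite !corner_mul_sub; auto.
  replace (Cadd a (Copp a)) with C0 by Csolve. replace (Cadd (Copp a) a) with C0 by Csolve.
  replace (Cmul a (Copp a)) with (Copp (Cmul a a)) by Csolve.
  replace (Cmul (Copp a) a) with (Copp (Cmul a a)) by Csolve.
  rewrite smul_C0, opp_zero, add_zero, smul_Copp. auto.
Qed.

Lemma resolvent_identity z w : F z -' F w = Cadd z (Copp w) %* (F z *' F w).
Proof.
  transitivity (F z *' ((b -' w %* f) -' (b -' z %* f)) *' F w).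
  - rewrite mul_sub_r, mul_sub_l, (cr_inv_l _ _ _ H), <- (mul_assoc _ (F z)), (cr_inv_r _ _ _ H).
    rewrite (cr_Ff _ _ _ H), (cr_fF _ _ _ H). auto.
  - rewrite sub_sub_cancel_l, smul_sub_C, mul_smul_r, mul_smul_l, <- mul_assoc, (cr_fF _ _ _ H). auto.
Qed.

Lemma resolvent_sub_norm z w :
  norm A (F z -' F w) <= Cmod (Cadd z (Copp w)) * (norm A (F z) * norm A (F w)).
Proof.
  rewrite resolvent_identity, norm_smul. apply Rmult_le_compat_l. apply Cmod_ge0. apply norm_mul.
Qed.

Lemma resolvent_local_bound w :
  exists d, 0 < d /\ forall z, Cmod (Cadd z (Copp w)) < d -> norm A (F z) <= 2 * norm A (F w).
Proof.
  set (M := norm A (F w)). assert (HM : 0 <= M) by apply norm_nonneg.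
  exists (/ (2 * (M + 1))). split. apply Rinv_0_lt_compat. lra.
  intros z Hz.
  pose proof (norm_le_add_sub (F z) (F w)). pose proof (resolvent_sub_norm z w).
  pose proof (norm_nonneg A (F z)). pose proof (Cmod_ge0 (Cadd z (Copp w))).
  set (N := norm A (F z)) in *. set (c := Cmod (Cadd z (Copp w))) in *. fold M in H0, H1.
  assert (c * (2 * (M + 1)) < 1).
  { apply (Rmult_lt_compat_r (2 * (M + 1))) in Hz; [|lra]. rewrite Rinv_l in Hz; lra. }
  assert (c * M <= / 2) by nra.
  assert (c * (N * M) <= N / 2) by (unfold Rdiv; nra).
  lra.
Qed.

Lemma resolvent_disk_bound c : 0 <= c ->
  exists K, 0 <= K /\ forall z, Cmod z <= c -> norm A (F z) <= K.
Proof.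
  intros Hc.
  destruct (rectangle_local_bound (fun x y => norm A (F (x, y))) (-c) c (-c) c) as [K HK]; try lra.
  - intros x y _ _. destruct (resolvent_local_bound (x, y)) as [d [Hd Hl]].
    exists (d / 2), (2 * norm A (F (x, y))). split. lra.
    intros x' y' Hx Hy. apply Hl. unfold Cadd, Copp; simpl.
    eapply Rle_lt_trans. apply Cmod_le_abs_sum. unfold Rminus in Hx, Hy. lra.
  - exists (Rmax K 0). split. apply Rmax_r. intros [x y] Hz.
    destruct (Rabs_le_Cmod x y).
    pose proof (Rle_abs x). pose proof (Rle_abs (- x)). pose proof (Rle_abs y). pose proof (Rle_abs (- y)).
    rewrite Rabs_Ropp in *.
    eapply Rle_trans. apply HK; lra. apply Rmax_l.
Qed.

(* Averaging [(b - a f)^-1] and [(b + a f)^-1] gives [b (b^2 - a^2 f)^-1];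
   iterating, the average over [2^m]-th roots is [b^(N-1) (b^N - a^N f)^-1]. *)
Lemma dyadic_mean_identity m : forall r t,
  dyadic_mean F m r t *' (cpow f b (2 ^ m) -' circle_power m r t %* f) = cpow f b (pred (2 ^ m)).
Proof.
  pose proof (cr_idem _ _ _ H) as Hff. pose proof (cr_fb _ _ _ H) as Hfb. pose proof (cr_bf _ _ _ H) as Hbf.
  induction m; intros r t.
  - simpl. rewrite Hbf, circle_power_O. apply (cr_inv_l _ _ _ H).
  - set (N := (2 ^ m)%nat) in *. pose proof (Nat.pow_nonzero 2 m ltac:(lia)) as HN. fold N in HN.
    replace (2 ^ S m)%nat with (N + N)%nat by (simpl; unfold N; lia).
    replace (pred (N + N)) with (pred N + N)%nat by lia.
    rewrite !cpow_add, circle_power_S; auto.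
    set (B := cpow f b N). set (Bm := cpow f b (pred N)). set (a := circle_power m r t).
    assert (HBf : B *' f = B) by (apply cpow_f_r; auto).
    assert (HfB : f *' B = B) by (apply cpow_f_l; auto).
    assert (HBmf : Bm *' f = Bm) by (apply cpow_f_r; auto).
    destruct (corner_square_sub B a HBf HfB) as [E1 E2].
    simpl dyadic_mean. rewrite mul_smul_l, mul_add_l, <- E1 at 1. rewrite <- E2.
    rewrite !mul_assoc, IHm. fold a.
    assert (E : dyadic_mean F m r (t + PI / 2 ^ m) *' (B -' Copp a %* f) = Bm).
    { unfold a. rewrite <- circle_power_shift. apply IHm. }
    rewrite E, !mul_sub_r, !mul_smul_r. fold Bm. rewrite HBmf, smul_Copp, opp_opp.
    rewrite add_add_sub. apply half_double.
Qed.

Lemma dyadic_mean_lipschitz c K r : 0 <= r <= c ->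
  (forall z, Cmod z <= c -> norm A (F z) <= K) ->
  forall m t t', norm A (dyadic_mean F m r t -' dyadic_mean F m r t') <= K * K * r * Rabs (t - t').
Proof.
  intros Hr HFK m. induction m; intros t t'.
  - simpl. eapply Rle_trans. apply resolvent_sub_norm.
    replace (Cadd (Cmul (CR r) (cis t)) (Copp (Cmul (CR r) (cis t')))) with
      (Cmul (CR r) (Cadd (cis t) (Copp (cis t')))) by Csolve.
    rewrite Cmod_mul, Cmod_CR, Rabs_right by lra.
    assert (HK : forall u, norm A (F (Cmul (CR r) (cis u))) <= K).
    { intros u. apply HFK. rewrite Cmod_mul, Cmod_CR, Cmod_cis, Rabs_right by lra. lra. }
    pose proof (HK t). pose proof (HK t'). pose proof (Cmod_cis_sub_le t t').
    pose proof (norm_nonneg A (F (Cmul (CR r) (cis t)))).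
    pose proof (norm_nonneg A (F (Cmul (CR r) (cis t')))).
    pose proof (Cmod_ge0 (Cadd (cis t) (Copp (cis t')))).
    replace (K * K * r * Rabs (t - t')) with ((r * Rabs (t - t')) * (K * K)) by ring.
    apply Rmult_le_compat; try apply Rmult_le_compat; try apply Rmult_le_pos; auto; lra.
  - simpl dyadic_mean. rewrite <- smul_opp, <- smul_addV, add_sub_add, norm_smul, Cmod_CR.
    rewrite Rabs_right by lra.
    eapply Rle_trans. apply Rmult_le_compat_l. lra. apply norm_triangle.
    pose proof (IHm t t') as H1. pose proof (IHm (t + PI / 2 ^ m) (t' + PI / 2 ^ m)) as H2.
    replace (t + PI / 2 ^ m - (t' + PI / 2 ^ m)) with (t - t') in H2 by ring. lra.
Qed.

Lemma corner_resolvent_inverse_power N :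
  cpow f (F C0) N *' cpow f b N = f /\ cpow f b N *' cpow f (F C0) N = f.
Proof.
  pose proof (cr_idem _ _ _ H) as Hff. pose proof (cr_fb _ _ _ H) as Hfb. pose proof (cr_bf _ _ _ H) as Hbf.
  pose proof (cr_inv_l _ _ _ H C0) as Hyb. pose proof (cr_inv_r _ _ _ H C0) as Hby.
  rewrite smul_C0, sub_0_r in Hyb, Hby.
  pose proof (cr_fF _ _ _ H C0). pose proof (cr_Ff _ _ _ H C0).
  split; apply cpow_inv; auto; congruence.
Qed.

(* With [N = 2^m], [Y = b^-N] and [rho = r^N], the two dyadic means at angles
   [0] and [pi / 2^m] invert [b^N - rho] and [b^N + rho] up to [b^(N-1)]. *)
Lemma dyadic_mean_difference m r (rho := CR (r ^ (2 ^ m))) (Y := cpow f (F C0) (2 ^ m)) :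
  (dyadic_mean F m r 0 -' dyadic_mean F m r (PI / 2 ^ m)) *' (f -' Cmul rho rho %* (Y *' Y)) *' b
  = Cadd rho rho %* Y.
Proof.
  pose proof (cr_idem _ _ _ H) as Hff. pose proof (cr_fb _ _ _ H) as Hfb. pose proof (cr_bf _ _ _ H) as Hbf.
  set (y := F C0) in Y. set (N := (2 ^ m)%nat) in rho, Y.
  pose proof (Nat.pow_nonzero 2 m ltac:(lia)) as HN. fold N in HN.
  assert (Hyb : y *' b = b *' y).
  { pose proof (cr_inv_l _ _ _ H C0) as E1. pose proof (cr_inv_r _ _ _ H C0) as E2.
    rewrite smul_C0, sub_0_r in E1, E2. unfold y. congruence. }
  set (B := cpow f b N). set (Bm := cpow f b (pred N)).
  destruct (corner_resolvent_inverse_power N) as [HYB HBY]. fold y B Y in HYB, HBY.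
  assert (HfY : f *' Y = Y) by (apply cpow_f_l; auto; apply (cr_fF _ _ _ H)).
  assert (HBf : B *' f = B) by (apply cpow_f_r; auto).
  assert (HfB : f *' B = B) by (apply cpow_f_l; auto).
  assert (HBmf : Bm *' f = Bm) by (apply cpow_f_r; auto).
  assert (HYb : (Y *' Y) *' b = b *' (Y *' Y)).
  { assert (HYb0 : Y *' b = b *' Y) by (apply cpow_comm; auto; apply (cr_fF _ _ _ H)).
    rewrite <- mul_assoc, HYb0, mul_assoc, HYb0, <- mul_assoc. auto. }
  assert (HBmb : Bm *' b = B).
  { unfold Bm, B. rewrite cpow_comm; auto. replace N with (S (pred N)) at 2 by lia. auto. }
  assert (HP : dyadic_mean F m r 0 *' (B -' rho %* f) = Bm).
  { unfold rho, B, Bm, N. rewrite <- circle_power_0. apply dyadic_mean_identity. }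
  assert (HQ : dyadic_mean F m r (PI / 2 ^ m) *' (B -' Copp rho %* f) = Bm).
  { unfold rho, B, Bm, N. rewrite <- circle_power_0, <- circle_power_shift, Rplus_0_l.
    apply dyadic_mean_identity. }
  destruct (corner_square_sub B rho HBf HfB) as [E1 E2].
  assert (Hsq : (B *' B -' Cmul rho rho %* f) *' (Y *' Y) = f -' Cmul rho rho %* (Y *' Y)).
  { rewrite mul_sub_l, mul_smul_l, mul_assoc, <- (mul_assoc _ B B Y), HBY, HBf, HBY, mul_assoc, HfY.
    auto. }
  assert (HD : (dyadic_mean F m r 0 -' dyadic_mean F m r (PI / 2 ^ m)) *' (B *' B -' Cmul rho rho %* f)
               = Cadd rho rho %* Bm).
  { rewrite mul_sub_l. rewrite <- E1 at 1. rewrite <- E2, !mul_assoc, HP, HQ, !mul_sub_r, !mul_smul_r,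
      HBmf, sub_sub_cancel_l, smul_Copp, opp_opp, smul_addC. auto. }
  rewrite <- Hsq, mul_assoc, HD, !mul_smul_l, <- mul_assoc, HYb, mul_assoc, HBmb, mul_assoc, HBY, HfY.
  auto.
Qed.

Lemma corner_inverse_power_norm N :
  0 < norm A (cpow f (F C0) N) /\ 1 <= norm A (cpow f (F C0) N) * norm A b ^ N.
Proof.
  pose proof (cr_nz _ _ _ H) as Hfnz. set (Y := cpow f (F C0) N).
  destruct (corner_resolvent_inverse_power N) as [HYB _]. fold Y in HYB.
  split.
  - apply norm_pos. intros E. apply Hfnz. rewrite <- HYB, E, mul_0_l. auto.
  - pose proof (norm_mul A Y (cpow f b N)) as H1. rewrite HYB in H1.
    pose proof (cpow_norm f b N). pose proof (norm_pos _ Hfnz). pose proof (norm_nonneg A Y).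
    apply (Rmult_le_reg_r (norm A f)); nra.
Qed.

Lemma dyadic_mean_difference_norm c K m r : 0 <= r <= c ->
  (forall z, Cmod z <= c -> norm A (F z) <= K) ->
  norm A (dyadic_mean F m r 0 -' dyadic_mean F m r (PI / 2 ^ m)) <= K * K * c * PI / 2 ^ m.
Proof.
  intros Hr HFK. assert (H2m : 0 < 2 ^ m) by (apply pow_lt; lra).
  pose proof PI_RGT_0. pose proof (Rinv_0_lt_compat _ H2m).
  assert (HK : 0 <= K) by (eapply Rle_trans; [apply norm_nonneg|apply (HFK C0); rewrite Cmod_C0; lra]).
  eapply Rle_trans. apply (dyadic_mean_lipschitz c K r); auto.
  rewrite Rminus_0_l, Rabs_Ropp, Rabs_right by (apply Rle_ge, Rlt_le, Rdiv_lt_0_compat; lra).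
  unfold Rdiv. replace (K * K * c * PI * / 2 ^ m) with (K * K * c * (PI * / 2 ^ m)) by ring.
  apply Rmult_le_compat_r; [nra|]. apply Rmult_le_compat_l; nra.
Qed.

(* In [dyadic_mean_difference] the left side has norm at most
   [K^2 c pi (|f| + 1) |b| / 2^m], the right side has norm [2]. *)
Lemma corner_resolvent_absurd : False.
Proof.
  set (c := norm A b + 1). assert (Hb0 : 0 <= norm A b) by apply norm_nonneg.
  destruct (resolvent_disk_bound c) as [K [HK HFK]]. unfold c; lra.
  set (E := K * K * c * PI * (norm A f + 1) * norm A b).
  destruct (INR_unbounded E) as [m Hm].
  pose proof (lt_INR _ _ (Nat.pow_gt_lin_r 2 m ltac:(lia))) as Hm2.
  rewrite pow_INR in Hm2. replace (INR 2) with 2 in Hm2 by (simpl; ring).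
  set (N := (2 ^ m)%nat). set (Y := cpow f (F C0) N).
  destruct (corner_inverse_power_norm N) as [HYpos HYbig]. fold Y in HYpos, HYbig.
  destruct (root_radius (norm A Y) (norm A b) c N) as [r [Hr0 [Hrc HrN]]]; auto.
  { pose proof (Nat.pow_nonzero 2 m ltac:(lia)). unfold N. lia. }
  { unfold c; lra. }
  destruct (scaled_inverse_norms Y r N HYpos HrN) as [HR HYY].
  pose proof (dyadic_mean_difference m r) as HD. fold N Y in HD.
  pose proof (dyadic_mean_difference_norm c K m r ltac:(lra) HFK) as HDn.
  set (D := dyadic_mean F m r 0 -' dyadic_mean F m r (PI / 2 ^ m)) in HD, HDn.
  set (rho := CR (r ^ N)) in HD, HR, HYY.
  assert (HL : norm A (D *' (f -' Cmul rho rho %* (Y *' Y)) *' b) <= norm A D * (norm A f + 1) * norm A b).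
  { eapply Rle_trans. apply norm_mul. apply Rmult_le_compat_r; auto.
    eapply Rle_trans. apply norm_mul. apply Rmult_le_compat_l. apply norm_nonneg.
    eapply Rle_trans. apply norm_sub_le. lra. }
  rewrite HD, HR in HL.
  assert (H2m : 0 < 2 ^ m) by (apply pow_lt; lra).
  assert (norm A D * (norm A f + 1) * norm A b <= E / 2 ^ m).
  { unfold E, Rdiv. pose proof (norm_nonneg A f).
    replace (K * K * c * PI * (norm A f + 1) * norm A b * / 2 ^ m)
      with (K * K * c * PI / 2 ^ m * (norm A f + 1) * norm A b) by (field; lra).
    apply Rmult_le_compat_r; auto. apply Rmult_le_compat_r; lra. }
  assert (E / 2 ^ m < 1).
  { unfold Rdiv. apply (Rmult_lt_reg_r (2 ^ m)); auto. rewrite Rmult_assoc, Rinv_l; lra. }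
  lra.
Qed.

End CornerResolvent.

Lemma minimal_corner_inverse L f c : minimal_idempotent L f ->
  f *' c = c -> c *' f = c -> c <> zero A ->
  exists d, d *' c = f /\ c *' d = f /\ f *' d = d /\ d *' f = d.
Proof.
  intros M Hfc Hcf Hc.
  pose proof (mi_idem _ _ M) as Hff. pose proof (mi_nz _ _ M) as Hfnz.
  assert (Lc : L c) by (apply (mi_gen _ _ M); exists c; auto).
  destruct (minimal_left_ideal_generated L c (mi_min _ _ M) Lc Hc f (mi_in _ _ M)) as [z Hz].
  set (d := f *' z *' f).
  assert (Hdc : d *' c = f) by (unfold d; rewrite <- mul_assoc, Hfc, <- mul_assoc, <- Hz, Hff; auto).
  assert (Hfd : f *' d = d) by (unfold d; rewrite !mul_assoc, Hff; auto).
  assert (Hdf : d *' f = d) by (unfold d; rewrite <- mul_assoc, Hff; auto).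
  assert (Hd : d <> zero A) by (intros E; apply Hfnz; rewrite <- Hdc, E, mul_0_l; auto).
  assert (Ld : L d) by (apply (mi_gen _ _ M); exists d; auto).
  destruct (minimal_left_ideal_generated L d (mi_min _ _ M) Ld Hd f (mi_in _ _ M)) as [z' Hz'].
  set (d' := f *' z' *' f).
  assert (Hd'd : d' *' d = f) by (unfold d'; rewrite <- mul_assoc, Hfd, <- mul_assoc, <- Hz', Hff; auto).
  assert (Ecd : c = d').
  { rewrite <- Hfc, <- Hd'd, <- mul_assoc, Hdc. unfold d'. rewrite <- mul_assoc, Hff. auto. }
  exists d. repeat split; auto. rewrite Ecd. auto.
Qed.

(* Gelfand-Mazur: otherwise every [f a f - z f] is invertible in [f A f]. *)
Lemma minimal_corner_scalar L f a : minimal_idempotent L f -> exists lam, f *' a *' f = lam %* f.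
Proof.
  intros M. pose proof (mi_idem _ _ M) as Hff.
  apply NNPP. intros N.
  set (b := f *' a *' f).
  assert (Hex : forall z, exists d, d *' (b -' z %* f) = f /\ (b -' z %* f) *' d = f /\
                                   f *' d = d /\ d *' f = d).
  { intros z. apply (minimal_corner_inverse L f); auto.
    - unfold b. rewrite mul_sub_r, mul_smul_r, Hff, !mul_assoc, Hff. auto.
    - unfold b. rewrite mul_sub_l, mul_smul_l, Hff, <- mul_assoc, Hff. auto.
    - intros E. apply N. exists z. apply sub_eq0. auto. }
  destruct (choice _ Hex) as [F HF].
  apply (corner_resolvent_absurd f b F).
  constructor; auto; try apply HF.
  - apply (mi_nz _ _ M).
  - unfold b. rewrite !mul_assoc, Hff. auto.
  - unfold b. rewrite <- mul_assoc, Hff. auto.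
Qed.

Lemma minimal_corner_rank1 L L' f f' : minimal_idempotent L f -> minimal_idempotent L' f' ->
  exists y, forall a, exists lam, f *' a *' f' = lam %* y.
Proof.
  intros M M'. pose proof (mi_idem _ _ M) as Hff. pose proof (mi_idem _ _ M') as Hff'.
  destruct (classic (forall a, f *' a *' f' = zero A)) as [Z|Z].
  { exists (zero A). intros a. exists C0. rewrite Z, smul_zero. auto. }
  apply not_all_ex_not in Z as [a0 Ha0].
  set (y := f *' a0 *' f').
  assert (Ly : L' y) by (apply (mi_gen _ _ M'); exists (f *' a0); auto).
  destruct (minimal_left_ideal_generated L' y (mi_min _ _ M') Ly Ha0 f' (mi_in _ _ M')) as [z Hz].
  set (z' := f' *' z *' f).
  assert (Hfy : f *' y = y) by (unfold y; rewrite !mul_assoc, Hff; auto).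
  assert (Hyf : y *' f' = y) by (unfold y; rewrite <- mul_assoc, Hff'; auto).
  assert (Hzy : z' *' y = f') by (unfold z'; rewrite <- mul_assoc, Hfy, <- mul_assoc, <- Hz, Hff'; auto).
  destruct (minimal_corner_scalar L f (a0 *' f' *' z) M) as [mu Hmu].
  assert (Hyz : y *' z' = mu %* f).
  { rewrite <- Hmu. unfold z'. rewrite !mul_assoc, Hyf. unfold y. repeat rewrite mul_assoc. auto. }
  assert (Hmu0 : mu <> C0).
  { intros E. apply Ha0. fold y. rewrite <- Hyf, <- Hzy, mul_assoc, Hyz, E, !smul_C0, mul_0_l. auto. }
  exists y. intros a.
  destruct (minimal_corner_scalar L' f' (z *' f *' a) M') as [lam Hlam].
  assert (E1 : z' *' (f *' a *' f') = lam %* f').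
  { rewrite <- Hlam. unfold z'. repeat rewrite mul_assoc. rewrite <- (mul_assoc _ _ f f), Hff. auto. }
  assert (E2 : mu %* (f *' a *' f') = lam %* y).
  { transitivity (y *' z' *' (f *' a *' f')).
    - rewrite Hyz, mul_smul_l, !mul_assoc, Hff. auto.
    - rewrite <- mul_assoc, E1, mul_smul_r, Hyf. auto. }
  exists (Cmul (Cinv mu) lam). rewrite <- smul_assoc, <- E2, smul_assoc, Cinv_l, smul_one; auto.
Qed.

(** * Neumann series *)

Lemma geometric_small t M eps : 0 <= t < 1 -> 0 <= M -> 0 < eps ->
  exists N, forall n, (N <= n)%nat -> M * t ^ n < eps.
Proof.
  intros Ht HM He.
  destruct (pow_lt_1_zero t ltac:(rewrite Rabs_right; lra) (eps / (M + 1))) as [N HN].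
  { apply Rdiv_lt_0_compat; lra. }
  exists N. intros n Hn. specialize (HN n Hn). rewrite Rabs_right in HN by (apply Rle_ge, pow_le; lra).
  apply (Rmult_lt_compat_l (M + 1)) in HN; [|lra].
  replace ((M + 1) * (eps / (M + 1))) with eps in HN by (field; lra).
  pose proof (pow_le t n (proj1 Ht)). nra.
Qed.

Fixpoint powA (d : A) (k : nat) : A :=
  match k with O => one A | S k => d *' powA d k end.

Fixpoint geometric_sum (d : A) (n : nat) : A :=
  match n with O => zero A | S n => geometric_sum d n +' powA d n end.

Lemma powA_norm d k : norm A (powA d k) <= norm A d ^ k * norm A (one A).
Proof.
  induction k; simpl. lra. eapply Rle_trans. apply norm_mul.
  rewrite Rmult_assoc. apply Rmult_le_compat_l; auto. apply norm_nonneg.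
Qed.

Lemma geometric_sum_telescope d n : geometric_sum d n *' (one A -' d) = one A -' powA d n.
Proof.
  assert (Hc : forall k, powA d k *' d = d *' powA d k).
  { induction k; simpl. rewrite mul_one_l, mul_one_r; auto. rewrite <- mul_assoc, IHk. auto. }
  induction n; simpl. rewrite mul_0_l, sub_diag. auto.
  rewrite mul_add_l, IHn, mul_sub_r, mul_one_r, Hc, sub_add_sub. auto.
Qed.

Lemma geometric_sum_tail d n j : norm A d < 1 ->
  norm A (geometric_sum d (j + n) -' geometric_sum d n) <= norm A (one A) * norm A d ^ n / (1 - norm A d).
Proof.
  intros Hd. pose proof (norm_nonneg A d) as Hd0. pose proof (norm_nonneg A (one A)) as H10.
  set (t := norm A d) in *. set (M := norm A (one A)) in *.
  assert (Hj : forall j, norm A (geometric_sum d (j + n) -' geometric_sum d n)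
                         <= M * t ^ n * (1 - t ^ j) / (1 - t)).
  { induction j0; simpl.
    - rewrite sub_diag, norm_zero, Rminus_diag. unfold Rdiv. rewrite Rmult_0_r, Rmult_0_l. lra.
    - replace (geometric_sum d (j0 + n) +' powA d (j0 + n) -' geometric_sum d n) with
        ((geometric_sum d (j0 + n) -' geometric_sum d n) +' powA d (j0 + n))
        by (rewrite <- !add_assoc; f_equal; apply add_comm).
      eapply Rle_trans. apply norm_triangle.
      eapply Rle_trans. apply Rplus_le_compat. apply IHj0. apply powA_norm. fold t M.
      rewrite pow_add. right. field. lra. }
  eapply Rle_trans. apply Hj.
  pose proof (pow_le t n Hd0). pose proof (pow_le t j Hd0).
  assert (t ^ j <= 1) by (clear -Hd Hd0; induction j; simpl; nra).
  unfold Rdiv. apply Rmult_le_compat_r. left; apply Rinv_0_lt_compat; lra.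
  assert (0 <= M * t ^ n) by (apply Rmult_le_pos; auto). nra.
Qed.

Lemma geometric_sum_cauchy d : norm A d < 1 ->
  forall eps, 0 < eps -> exists N, forall m n, (N <= m)%nat -> (N <= n)%nat ->
    norm A (geometric_sum d m -' geometric_sum d n) < eps.
Proof.
  intros Hd eps He. pose proof (norm_nonneg A d).
  destruct (geometric_small (norm A d) (norm A (one A)) (eps * (1 - norm A d))) as [N HN]; try lra.
  apply norm_nonneg. apply Rmult_lt_0_compat; lra.
  assert (Hle : forall m n, (N <= n)%nat -> (n <= m)%nat ->
            norm A (geometric_sum d m -' geometric_sum d n) < eps).
  { intros m n Hn Hnm. replace m with ((m - n) + n)%nat by lia.
    eapply Rle_lt_trans. apply geometric_sum_tail; auto.
    apply (Rmult_lt_reg_r (1 - norm A d)). lra.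
    unfold Rdiv. rewrite Rmult_assoc, Rinv_l, Rmult_1_r by lra. auto. }
  exists N. intros m n Hm Hn. destruct (Nat.le_ge_cases n m).
  - apply Hle; auto.
  - rewrite norm_sub_sym. apply Hle; auto.
Qed.

Lemma neumann_left_inverse d : norm A d < 1 -> exists q, q *' (one A -' d) = one A.
Proof.
  intros Hd. pose proof (norm_nonneg A d) as Hd0. pose proof (norm_nonneg A (one A)) as H10.
  set (t := norm A d) in *. set (M := norm A (one A)) in *.
  destruct (complete A (geometric_sum d) (geometric_sum_cauchy d Hd)) as [q Hq].
  exists q. apply eq_of_norm_sub_small. intros eps He.
  destruct (Hq (eps / (2 * (M + t + 1)))) as [N1 HN1]. apply Rdiv_lt_0_compat; lra.
  destruct (geometric_small t M (eps / 2)) as [N2 HN2]; [lra|lra|lra|].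
  set (n := (N1 + N2)%nat).
  specialize (HN1 n ltac:(unfold n; lia)). specialize (HN2 n ltac:(unfold n; lia)).
  rewrite norm_sub_sym in HN1.
  rewrite <- (sub_add_sub _ (geometric_sum d n *' (one A -' d))), <- mul_sub_l,
    geometric_sum_telescope, sub_swap_self.
  eapply Rle_lt_trans. apply norm_triangle. rewrite norm_opp.
  eapply Rle_lt_trans. apply Rplus_le_compat. apply norm_mul. apply powA_norm. fold t M.
  assert (H1d : norm A (one A -' d) <= M + t) by apply norm_sub_le.
  pose proof (norm_nonneg A (q -' geometric_sum d n)).
  assert (norm A (q -' geometric_sum d n) * norm A (one A -' d) <= eps / (2 * (M + t + 1)) * (M + t))
    by (apply Rmult_le_compat; try lra; apply norm_nonneg).
  assert (eps / (2 * (M + t + 1)) * (M + t) <= eps / 2).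
  { unfold Rdiv. apply (Rmult_le_reg_r (2 * (M + t + 1))). lra.
    replace (eps * / (2 * (M + t + 1)) * (M + t) * (2 * (M + t + 1))) with (eps * (M + t)) by (field; lra).
    nra. }
  lra.
Qed.

Lemma in_span_mono (l l' : list A) x : incl l l' -> in_span A l x -> in_span A l' x.
Proof. intros Hs. induction 1; constructor; auto. Qed.

Lemma in_spanD (l : list A) x y : in_span A l x -> in_span A l y -> in_span A l (x +' y).
Proof. induction 1; intros Hy. rewrite add_0_l; auto. rewrite <- add_assoc. constructor; auto. Qed.

Lemma in_spanZ (l : list A) c x : in_span A l x -> in_span A l (c %* x).
Proof. induction 1. rewrite smul_zero; constructor. rewrite smul_addV, smul_assoc. constructor; auto. Qed.

Lemma in_spanB (l : list A) x y : in_span A l x -> in_span A l y -> in_span A l (x -' y).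
Proof. intros. apply in_spanD; auto. rewrite <- smul_opp1. apply in_spanZ; auto. Qed.

Lemma in_span_elem (l : list A) v : In v l -> in_span A l v.
Proof. intros H. rewrite <- (smul_one _ v), <- (add_zero _ (C1 %* v)). constructor; auto. constructor. Qed.

Lemma in_span_app_add (l l' : list A) x y : in_span A l x -> in_span A l' y -> in_span A (l ++ l') (x +' y).
Proof.
  intros Hx Hy. apply in_spanD; eapply in_span_mono; eauto; intros v Hv; apply in_or_app; auto.
Qed.

Lemma in_span_nil x : in_span A nil x -> x = zero A.
Proof. inversion 1; auto. contradiction. Qed.

Lemma in_span_trans (l1 l2 : list A) x : (forall v, In v l1 -> in_span A l2 v) ->
  in_span A l1 x -> in_span A l2 x.
Proof. intros Hs. induction 1. constructor. apply in_spanD; auto. apply in_spanZ; auto. Qed.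

Lemma in_span_cons v l x : in_span A (v :: l) x -> exists a r, in_span A l r /\ x = a %* v +' r.
Proof.
  induction 1 as [|c w y Hw Hy [a [r [Hr ->]]]].
  - exists C0, (zero A). split. constructor. rewrite smul_C0, add_zero. auto.
  - destruct Hw as [<-|Hw].
    + exists (Cadd c a), r. split; auto. rewrite smul_addC, add_assoc. auto.
    + exists a, (c %* w +' r). split. constructor; auto.
      rewrite !add_assoc, (add_comm _ (c %* w)). auto.
Qed.

(* Gaussian elimination of [v] using a vector [x0] whose [v]-coordinate is nonzero. *)
Lemma in_span_cons_eliminate v l x0 : in_span A (v :: l) x0 -> ~ in_span A l x0 ->
  forall x, in_span A (v :: l) x -> exists y c, in_span A l y /\ x = y +' c %* x0.
Proof.
  intros Hx0 Hns x Hx.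
  destruct (in_span_cons v l x0 Hx0) as [a0 [r0 [Hr0 Ex0]]].
  assert (Ha0 : a0 <> C0) by (intros E; apply Hns; rewrite Ex0, E, smul_C0, add_0_l; auto).
  destruct (in_span_cons v l x Hx) as [a [r [Hr Ex]]].
  set (c := Cmul a (Cinv a0)).
  exists (r -' c %* r0), c. split. apply in_spanB; auto. apply in_spanZ; auto.
  rewrite Ex, Ex0, smul_addV, smul_assoc.
  replace (Cmul c a0) with a by (unfold c; rewrite <- Cmul_assoc, Cinv_l, Cmul_comm, Cmul_1_l; auto).
  rewrite (add_comm _ (a %* v) (c %* r0)), add_assoc, <- (add_assoc _ r), add_opp_l, add_zero.
  apply add_comm.
Qed.

Lemma Forall2_In_l {X Y : Type} (R : X -> Y -> Prop) l l' x :
  Forall2 R l l' -> In x l -> exists y, In y l' /\ R x y.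
Proof.
  induction 1; intros []; subst; eauto using in_eq.
  destruct IHForall2 as [z [? ?]]; eauto using in_cons.
Qed.

Lemma Forall2_In_r {X Y : Type} (R : X -> Y -> Prop) l l' y :
  Forall2 R l l' -> In y l' -> exists x, In x l /\ R x y.
Proof.
  induction 1; intros []; subst; eauto using in_eq.
  destruct IHForall2 as [z [? ?]]; eauto using in_cons.
Qed.

Lemma Forall2_of_pointwise {X Y : Type} (R : X -> Y -> Prop) (l : list X) :
  (forall x, In x l -> exists y, R x y) -> exists l', Forall2 R l l'.
Proof.
  induction l as [|x l IH]; intros H. exists nil; constructor.
  destruct (H x (in_eq x l)) as [y Hy]. destruct IH as [l' Hl']; [eauto using in_cons|].
  exists (y :: l'). constructor; auto.
Qed.

Lemma in_span_overfull_dependent (l : list A) : forall g : list A,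
  (length l < length g)%nat -> (forall x, In x g -> in_span A l x) ->
  exists x r, Permutation g (x :: r) /\ in_span A r x.
Proof.
  induction l as [|v l' IH]; intros g Hlen Hg.
  { destruct g as [|x r]. simpl in Hlen; lia.
    exists x, r. split; auto. rewrite (in_span_nil x (Hg x (in_eq x r))). constructor. }
  destruct (classic (forall x, In x g -> in_span A l' x)) as [Hall|Hnot].
  { apply IH; auto. simpl in Hlen; lia. }
  apply not_all_ex_not in Hnot as [x0 Hx0]. apply imply_to_and in Hx0 as [Ing Hns].
  destruct (in_split x0 g Ing) as [g1 [g2 Eg]].
  assert (Pg : Permutation g (x0 :: g1 ++ g2)) by (rewrite Eg; symmetry; apply Permutation_middle).
  set (R := fun x y => in_span A l' y /\ exists c, x = y +' c %* x0).
  destruct (Forall2_of_pointwise R (g1 ++ g2)) as [g0' Hg0'].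
  { intros x Hx.
    assert (Hgx : In x g) by (apply (Permutation_in _ (Permutation_sym Pg)), in_cons, Hx).
    destruct (in_span_cons_eliminate v l' x0 (Hg x0 Ing) Hns x (Hg x Hgx)) as [y [c [Hy Ex]]].
    exists y. split; eauto. }
  destruct (IH g0') as [y [r' [Py Hy]]].
  { rewrite <- (Forall2_length Hg0'). apply Permutation_length in Pg. simpl in Pg, Hlen. lia. }
  { intros y Hy. destruct (Forall2_In_r R _ _ y Hg0' Hy) as [x [_ [Ry _]]]. auto. }
  assert (Hflip : Forall2 (fun y x => R x y) g0' (g1 ++ g2)) by (clear -Hg0'; induction Hg0'; auto).
  destruct (Permutation_Forall2 Py Hflip) as [[|x r] [Pm Fm]]; inversion Fm as [|? ? ? ? Rxy Fr].
  exists x, (x0 :: r). split.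
  - eapply perm_trans. exact Pg. eapply perm_trans. apply perm_skip, Pm. apply perm_swap.
  - destruct Rxy as [_ [c ->]]. apply in_spanD.
    + apply (in_span_trans r'); [|exact Hy].
      intros z Hz. destruct (Forall2_In_l _ r' r z Fr Hz) as [w [Hw [_ [c' Ew]]]].
      symmetry in Ew. apply add_move_r in Ew as ->.
      apply in_spanB; [apply in_span_elem, in_cons, Hw|apply in_spanZ, in_span_elem, in_eq].
    + apply in_spanZ, in_span_elem, in_eq.
Qed.

(** * Orthogonal idempotents in the socle *)

Definition sumL (l : list A) : A := fold_right (add A) (zero A) l.

Lemma sumL_mul_r (l : list A) x : (forall y, In y l -> y *' x = zero A) -> sumL l *' x = zero A.
Proof.
  induction l as [|y l IH]; intros H; simpl. apply mul_0_l.
  rewrite mul_add_l, H, IH, add_zero; auto using in_eq, in_cons.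
Qed.

Lemma sumL_mul_l (l : list A) x : (forall y, In y l -> x *' y = zero A) -> x *' sumL l = zero A.
Proof.
  induction l as [|y l IH]; intros H; simpl. apply mul_0_r.
  rewrite mul_add_r, H, IH, add_zero; auto using in_eq, in_cons.
Qed.

Lemma sumL_fix_l (l : list A) e : (forall y, In y l -> e *' y = y) -> e *' sumL l = sumL l.
Proof.
  induction l as [|y l IH]; intros H; simpl. apply mul_0_r.
  rewrite mul_add_r, H, IH; auto using in_eq, in_cons.
Qed.

Lemma socle_sumL (l : list A) : (forall y, In y l -> socle A y) -> socle A (sumL l).
Proof.
  induction l as [|y l IH]; intros H; simpl. constructor.
  apply socleD; auto using in_eq, in_cons.
Qed.

Lemma in_span_annihilated (r : list A) x w : (forall y, In y r -> x *' y = zero A) ->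
  in_span A r w -> x *' w = zero A.
Proof.
  intros H. induction 1. apply mul_0_r.
  rewrite mul_add_r, mul_smul_r, H, IHin_span, smul_zero, add_zero; auto.
Qed.

Inductive orthogonal_idempotents : list A -> Prop :=
| orthogonal_nil : orthogonal_idempotents nil
| orthogonal_cons h g : h *' h = h -> h <> zero A -> socle A h ->
    (forall x, In x g -> h *' x = zero A /\ x *' h = zero A) ->
    orthogonal_idempotents g -> orthogonal_idempotents (h :: g).

Lemma orthogonal_idempotents_In g x : orthogonal_idempotents g -> In x g ->
  x *' x = x /\ x <> zero A /\ socle A x.
Proof. induction 1; simpl; intros Hx; [contradiction|destruct Hx as [<-|Hx]; auto]. Qed.

Lemma orthogonal_idempotents_unit g : orthogonal_idempotents g ->
  forall x, In x g -> sumL g *' x = x /\ x *' sumL g = x.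
Proof.
  induction 1 as [|h g Hh _ _ Hhg _ IH]; simpl; intros x Hx; [contradiction|].
  rewrite mul_add_l, mul_add_r. destruct Hx as [<-|Hx].
  - rewrite sumL_mul_r, sumL_mul_l, Hh, add_zero; [auto| |]; intros y Hy; apply Hhg; auto.
  - destruct (Hhg x Hx) as [E1 E2]. destruct (IH x Hx) as [E3 E4].
    rewrite E1, E2, E3, E4, add_0_l. auto.
Qed.

Lemma orthogonal_idempotents_idem g : orthogonal_idempotents g -> sumL g *' sumL g = sumL g.
Proof. intros Hg. apply sumL_fix_l. intros x Hx. apply orthogonal_idempotents_unit; auto. Qed.

Lemma orthogonal_idempotents_pairwise g x y : orthogonal_idempotents g ->
  In x g -> In y g -> x <> y -> x *' y = zero A.
Proof.
  induction 1 as [|h g _ _ _ Hhg _ IH]; simpl; [contradiction|].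
  intros [<-|Hx] [<-|Hy] Hxy; try contradiction.
  - apply Hhg; auto.
  - apply Hhg; auto.
  - apply IH; auto.
Qed.

Lemma orthogonal_idempotents_NoDup g : orthogonal_idempotents g -> NoDup g.
Proof.
  induction 1 as [|h g Hh Hnz _ Hhg _ IH]; constructor; auto.
  intros Hin. apply Hnz. rewrite <- Hh. apply Hhg; auto.
Qed.

Lemma orthogonal_idempotents_independent g x r : orthogonal_idempotents g ->
  Permutation g (x :: r) -> ~ in_span A r x.
Proof.
  intros Hg Pg Hx.
  assert (Hnd : NoDup (x :: r)) by (eapply Permutation_NoDup; eauto using orthogonal_idempotents_NoDup).
  assert (Hin : forall y, In y (x :: r) -> In y g) by (intros y; apply Permutation_in, Permutation_sym, Pg).
  destruct (orthogonal_idempotents_In g x Hg (Hin x (in_eq x r))) as [Hxx [Hnz _]].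
  apply Hnz. rewrite <- Hxx. apply (in_span_annihilated r); auto.
  intros y Hy. apply (orthogonal_idempotents_pairwise g); auto using in_eq, in_cons.
  intros ->. inversion Hnd; auto.
Qed.

Lemma idempotent_complement_mul e f (h := (one A -' e) *' f) :
  e *' e = e -> f *' f = f -> f <> zero A -> f *' e = zero A ->
  h *' h = h /\ h <> zero A /\ h *' e = zero A /\ e *' h = zero A.
Proof.
  intros Hee Hff Hf Hfe.
  assert (Hfu : f *' (one A -' e) = f) by (rewrite mul_sub_r, mul_one_r, Hfe, sub_0_r; auto).
  repeat split.
  - unfold h. rewrite mul_assoc, <- (mul_assoc _ _ f), Hfu, <- mul_assoc, Hff. auto.
  - intros E. apply Hf. rewrite <- Hff, <- Hfu at 1. rewrite <- mul_assoc. fold h. rewrite E, mul_0_r. auto.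
  - unfold h. rewrite <- mul_assoc, Hfe, mul_0_r. auto.
  - unfold h. rewrite mul_assoc, mul_sub_r, mul_one_r, Hee, sub_diag, mul_0_l. auto.
Qed.

Lemma socle_nonannihilating t u : socle A t -> t *' u <> zero A ->
  exists L x, minimal_left_ideal A L /\ L x /\ x *' u <> zero A.
Proof.
  induction 1 as [|L x y HL Lx _ IH]; intros Hn. exfalso; apply Hn, mul_0_l.
  destruct (classic (x *' u = zero A)) as [Z|Z]; eauto.
  apply IH. rewrite mul_add_l, Z, add_0_l in Hn. auto.
Qed.

Lemma fixed_points_closure (phi : A -> A) K (S : A -> Prop) : 0 <= K ->
  (forall x y, norm A (phi x -' phi y) <= K * norm A (x -' y)) ->
  (forall s, S s -> phi s = s) -> forall x, closure A S x -> phi x = x.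
Proof.
  intros HK Hphi Hfix x Hx. apply eq_of_norm_sub_small. intros eps Heps.
  destruct (Hx (eps / (K + 1))) as [s [Ss Hs]]. apply Rdiv_lt_0_compat; lra.
  replace (phi x -' x) with ((phi x -' phi s) -' (x -' s)) by (rewrite (Hfix s Ss), sub_sub_cancel_r; auto).
  eapply Rle_lt_trans. apply norm_sub_le.
  eapply Rle_lt_trans. apply Rplus_le_compat_r, Hphi.
  apply (Rmult_lt_compat_l (K + 1)) in Hs; [|lra].
  replace ((K + 1) * (eps / (K + 1))) with eps in Hs by (field; lra). lra.
Qed.

Section SemisimpleSocle.
Hypothesis hA : semisimple A.

(* A minimal left ideal not killed by [1 - e] yields, by Brauer's lemma, an
   idempotent of the form [w (1 - e)]. *)
Lemma socle_idempotent_orth_r e s : e *' e = e -> socle A s -> s *' e <> s ->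
  exists f, socle A f /\ f *' f = f /\ f <> zero A /\ f *' e = zero A.
Proof.
  intros Hee Ss Hs. set (u := one A -' e).
  assert (Hue : u *' e = zero A) by (unfold u; rewrite mul_sub_l, mul_one_l, Hee, sub_diag; auto).
  assert (Htu : (s -' s *' e) *' u = s -' s *' e).
  { unfold u. rewrite mul_sub_r, mul_one_r, mul_sub_l, <- mul_assoc, Hee, sub_diag, sub_0_r. auto. }
  destruct (socle_nonannihilating (s -' s *' e) u) as [L [x [ML [Lx Hxu]]]].
  { apply socleB; auto. apply socleMr; auto. }
  { rewrite Htu. intros E. apply Hs. symmetry. apply sub_eq0. auto. }
  destruct (minimal_right_translate L u ML) as [Z|ML'].
  { exfalso. apply Hxu, Z; auto. }
  destruct (brauer_lemma hA _ ML') as [f Mf].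
  destruct (mi_in _ _ Mf) as [w [Lw ->]].
  exists (w *' u). repeat split.
  - apply (socle_of_minimal _ _ ML'). exists w; auto.
  - apply (mi_idem _ _ Mf).
  - apply (mi_nz _ _ Mf).
  - rewrite <- mul_assoc, Hue, mul_0_r. auto.
Qed.

Lemma orthogonal_idempotents_extend g s : orthogonal_idempotents g -> socle A s ->
  s *' sumL g <> s -> exists h, orthogonal_idempotents (h :: g).
Proof.
  intros Hg Ss Hs. set (e := sumL g).
  pose proof (orthogonal_idempotents_idem g Hg) as Hee. fold e in Hee.
  destruct (socle_idempotent_orth_r e s Hee Ss Hs) as [f [Sf [Hff [Hf Hfe]]]].
  destruct (idempotent_complement_mul e f Hee Hff Hf Hfe) as [Hhh [Hh [Hhe Heh]]].
  exists ((one A -' e) *' f). constructor; auto.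
  - apply socleMl; auto.
  - intros x Hx. destruct (orthogonal_idempotents_unit g Hg x Hx) as [Ex1 Ex2]. fold e in Ex1, Ex2.
    rewrite <- Ex1 at 1. rewrite <- Ex2 at 2. rewrite mul_assoc, Hhe, <- mul_assoc, Heh, mul_0_l, mul_0_r.
    auto.
Qed.

Lemma orthogonal_idempotents_saturate k : exists g, orthogonal_idempotents g /\
  ((k <= length g)%nat \/ forall s, socle A s -> s *' sumL g = s).
Proof.
  induction k as [|k [g [Hg [Hk|Hid]]]].
  - exists nil. split. constructor. left; simpl; lia.
  - destruct (classic (forall s, socle A s -> s *' sumL g = s)) as [Hid|Hn]; [exists g; auto|].
    apply not_all_ex_not in Hn as [s Hs]. apply imply_to_and in Hs as [Ss Hs].
    destruct (orthogonal_idempotents_extend g s Hg Ss Hs) as [h Hh].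
    exists (h :: g). split; auto. left. simpl. lia.
  - exists g; auto.
Qed.

(* [(1 - e) s] generates a square-zero left ideal, because [s c (1 - e) = 0]. *)
Lemma socle_right_unit_left e : (forall s, socle A s -> s *' e = s) ->
  forall s, socle A s -> e *' s = s.
Proof.
  intros He s Ss. set (u := one A -' e).
  assert (Ht : u *' s = zero A).
  { apply semisimple_semiprime; auto. intros a c.
    assert (Hz : s *' c *' u = zero A).
    { unfold u. rewrite mul_sub_r, mul_one_r, He, sub_diag; auto. apply socleMr; auto. }
    replace (a *' (u *' s) *' (c *' (u *' s))) with (a *' u *' (s *' c *' u) *' s)
      by (repeat rewrite mul_assoc; reflexivity).
    rewrite Hz, mul_0_r, mul_0_l. auto. }
  unfold u in Ht. rewrite mul_sub_l, mul_one_l in Ht. symmetry. apply sub_eq0. auto.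
Qed.

Lemma finite_dimensional_socle_unital :
  finite_dimensional A (socle A) -> has_identity A (closure A (socle A)).
Proof.
  intros [l Hl].
  destruct (orthogonal_idempotents_saturate (S (length l))) as [g [Hg [Hk|Hid]]].
  { exfalso. destruct (in_span_overfull_dependent l g) as [x [r [Pg Hx]]]; [lia| |].
    - intros x Hx. apply Hl, (orthogonal_idempotents_In g x Hg Hx).
    - apply (orthogonal_idempotents_independent g x r Hg Pg Hx). }
  set (e := sumL g).
  assert (Hle : forall s, socle A s -> e *' s = s) by (apply socle_right_unit_left; auto).
  exists e. split.
  { apply closure_incl, socle_sumL. intros x Hx. apply (orthogonal_idempotents_In g x Hg Hx). }
  intros x Cx. split.
  - apply (fixed_points_closure (mul A e) (norm A e) (socle A)); auto. apply norm_nonneg.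
    intros u v. rewrite <- mul_sub_r. apply norm_mul.
  - apply (fixed_points_closure (fun y => y *' e) (norm A e) (socle A)); auto. apply norm_nonneg.
    intros u v. rewrite <- mul_sub_l, Rmult_comm. apply norm_mul.
Qed.

(** * The socle of an algebra whose socle closure is unital *)

Definition socle_term (p : A * A) : Prop := exists L, minimal_idempotent L (snd p) /\ L (fst p).

Lemma socle_decompose x : socle A x ->
  exists l, x = sumL (map fst l) /\ forall p, In p l -> socle_term p.
Proof.
  induction 1 as [|L x y HL Lx _ [l [-> Hl]]].
  - exists nil. split; auto. intros p [].
  - destruct (brauer_lemma hA L HL) as [f Hf].
    exists ((x, f) :: l). split; auto. intros p [<-|Hp]; auto. exists L; auto.
Qed.

Lemma socle_term_sandwich x f z f' : socle_term (x, f) -> socle_term (z, f') ->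
  exists w, forall a, exists lam, x *' a *' z = lam %* w.
Proof.
  intros [L [M Lx]] [L' [M' Lz]]. simpl in *.
  destruct (minimal_corner_rank1 L L' f f' M M') as [y Hy].
  exists (x *' y). intros a. destruct (Hy (a *' z)) as [lam Hlam]. exists lam.
  transitivity (x *' (f *' (a *' z) *' f')).
  - rewrite <- (mul_assoc _ f), <- (mul_assoc _ a z f'), (minimal_idempotent_mulr L' f' z M' Lz),
      mul_assoc, (minimal_idempotent_mulr L f x M Lx), mul_assoc. auto.
  - rewrite Hlam, mul_smul_r. auto.
Qed.

Lemma socle_term_sandwich_span x f l : socle_term (x, f) -> (forall p, In p l -> socle_term p) ->
  exists W, forall a, in_span A W (x *' a *' sumL (map fst l)).
Proof.
  intros Hx. induction l as [|[z f'] l IH]; intros Hl.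
  - exists nil. intros a. simpl. rewrite mul_0_r. constructor.
  - destruct IH as [W HW]; auto using in_cons.
    destruct (socle_term_sandwich x f z f' Hx (Hl _ (in_eq _ l))) as [w Hw].
    exists (w :: W). intros a. simpl. rewrite mul_add_r.
    apply (in_span_app_add (w :: nil)); auto.
    destruct (Hw a) as [lam ->]. apply in_spanZ, in_span_elem, in_eq.
Qed.

Lemma socle_sandwich_span l1 l2 : (forall p, In p l1 -> socle_term p) -> (forall p, In p l2 -> socle_term p) ->
  exists W, forall a, in_span A W (sumL (map fst l1) *' a *' sumL (map fst l2)).
Proof.
  intros H1 H2. induction l1 as [|[x f] l1 IH].
  - exists nil. intros a. simpl. rewrite !mul_0_l. constructor.
  - destruct IH as [W1 HW1]; auto using in_cons.
    destruct (socle_term_sandwich_span x f l2) as [W2 HW2]; auto using in_eq.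
    exists (W2 ++ W1). intros a. simpl. rewrite !mul_add_l. apply in_span_app_add; auto.
Qed.

(* [(1 - (e - s)) e = s], and [1 - (e - s)] is left invertible when [|e - s| < 1]. *)
Lemma closure_identity_in_socle e : closure A (socle A) e -> e *' e = e ->
  (forall s, socle A s -> s *' e = s) -> socle A e.
Proof.
  intros Ce Hee Hse.
  destruct (Ce 1 Rlt_0_1) as [s [Ss Hs]].
  destruct (neumann_left_inverse (e -' s) Hs) as [q Hq].
  assert (E : (one A -' (e -' s)) *' e = s).
  { rewrite mul_sub_l, mul_one_l, mul_sub_l, Hee, (Hse s Ss). apply sub_sub_self. }
  replace e with (q *' s) by (rewrite <- E, mul_assoc, Hq, mul_one_l; auto).
  apply socleMl; auto.
Qed.

Lemma unital_socle_closure_finite_dimensional :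
  has_identity A (closure A (socle A)) -> finite_dimensional A (socle A).
Proof.
  intros [e [Ce He]].
  assert (Hse : forall s, socle A s -> e *' s = s /\ s *' e = s) by (intros; apply He, closure_incl; auto).
  assert (Se : socle A e).
  { apply closure_identity_in_socle; auto. apply He; auto. apply Hse. }
  destruct (socle_decompose e Se) as [l [El Hl]].
  destruct (socle_sandwich_span l l Hl Hl) as [W HW].
  exists W. intros s Ss.
  rewrite <- (proj1 (Hse s Ss)), <- (proj2 (Hse (e *' s) (socleMl e s Ss))), El. apply HW.
Qed.

End SemisimpleSocle.
End BanachAlgebra.

Theorem proposition1p8 (A : CBanachAlgebra) (hA : semisimple A) :
  finite_dimensional A (socle A) <-> has_identity A (closure A (socle A)).
Proof.
  split.
  - apply finite_dimensional_socle_unital; auto.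
  - apply unital_socle_closure_finite_dimensional; auto.
Qed.
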